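(* Let $T$ be a tree with at least two vertices. If $\mathcal{M}$ is a maximal $2$-matching of $T$, then there exist leaves $u\neq v$ of $T$ such that $E(P_{u,v})\subseteq\mathcal{M}$, where $P_{u,v}$ is the unique path in $T$ joining $u$ and $v$.
   Context: A $2$-matching of a graph is a set of edges such that every vertex is incident to at most two of them. A $2$-matching $\mathcal{M}$ is maximal if there is no $2$-matching $\mathcal{N}$ with $\mathcal{M}\subsetneq\mathcal{N}$. A leaf is a vertex of degree one. *)

(* A simple graph is a symmetric irreflexive relation
   g : rel T on a finite type T; edges are 2-element vertex sets. *)
From mathcomp Require Import all_boot.
Set Implicit Arguments. Unset Strict Implicit. Unset Printing Implicit Defensive.

Section Graphs.
Variable T : finType.

Definition simple_graph (g : rel T) : Prop := symmetric g /\ irreflexive g.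

Definition edges (g : rel T) : {set {set T}} :=
  [set [set x; y] | x in T, y in [set z | g x z]].

Definition connected (g : rel T) : Prop := forall x y : T, connect g x y.

Definition acyclic (g : rel T) : Prop :=
  forall c : seq T, uniq c -> 3 <= size c -> ~~ cycle g c.

Definition is_tree (g : rel T) : Prop :=
  simple_graph g /\ connected g /\ acyclic g.

Definition deg (g : rel T) (x : T) : nat := #|[set y | g x y]|.

Definition leaf (g : rel T) (x : T) : Prop := deg g x = 1.

Definition two_matching (g : rel T) (M : {set {set T}}) : Prop :=
  M \subset edges g /\ forall v : T, #|[set f in M | v \in f]| <= 2.

Definition maximal_two_matching (g : rel T) (M : {set {set T}}) : Prop :=
  two_matching g M /\
  forall N : {set {set T}}, two_matching g N -> ~ (M \proper N).

Definition walk_edges (u : T) (p : seq T) : {set {set T}} :=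
  [set [set xy.1; xy.2] | xy in zip (u :: p) p].

End Graphs.

From mathcomp Require Import all_boot zify.
From Stdlib Require Import Classical.
Set Implicit Arguments. Unset Strict Implicit. Unset Printing Implicit Defensive.

(* Call a step a -> b of a walk admissible if ab is in M or a has M-degree 2,
   and take a simple admissible walk, ending at a vertex covered by M, with the
   largest number of non-M edges.  Prepending an M-edge to it keeps it optimal,
   while prepending a non-M edge from a vertex of M-degree 2 would beat it; by
   maximality of M every non-M neighbour of a vertex of M-degree at most 1 has
   M-degree 2.  Hence walking backwards from the start of an optimal walk along
   M-edges, we stop at a vertex of M-degree 1 all of whose neighbours are
   M-neighbours, i.e. at a leaf.  Doing this in both M-directions from the
   first vertex not followed by an M-edge yields the two leaves; acyclicity
   keeps all these walks simple. *)

Lemma walk_edges_sub (T : finType) (M : {set {set T}}) u p :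
  path (fun a b => [set a; b] \in M) u p -> walk_edges u p \subset M.
Proof.
move=> mp; apply/subsetP => _ /imsetP[[a b] ab_in ->].
elim: p u mp ab_in => [|c p IHp] u //= /andP[muc mp]; rewrite in_cons.
by case/predU1P => [[-> ->] //|]; apply: IHp.
Qed.

Lemma sorted_rev_sym (S : Type) (e : rel S) (s : seq S) :
  symmetric e -> sorted e (rev s) = sorted e s.
Proof. by move=> e_sym; rewrite rev_sorted; apply: eq_sorted => x y; rewrite e_sym. Qed.

Lemma last_cons_eq_cat (S : eqType) (u y z : S) (Q P A : seq S) :
  uniq (u :: Q) -> u :: Q = P ++ [:: y, z & A] -> last u Q = last z A /\ u != last z A.
Proof.
move=> uQ eQ; have lQ : last u Q = last z A by rewrite -(last_cons u) eQ last_cat.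
split=> //; rewrite -lQ; case: Q {lQ} uQ eQ => [|b Q] /=; first by case: P => [|? []].
by case/andP=> uQ _ _; apply: contraNneq uQ => ->; apply: mem_last.
Qed.

Section TwoMatchingsInForests.
Variables (T : finType) (g : rel T) (M : {set {set T}}).
Hypotheses (g_sym : symmetric g) (g_irr : irreflexive g) (g_acyclic : acyclic g).
Hypothesis M_max : maximal_two_matching g M.

Definition mdeg (v : T) : nat := #|[set f in M | v \in f]|.

Definition matched : rel T := fun a b => [set a; b] \in M.

Definition admissible : rel T := fun a b => matched a b || (mdeg a == 2).

Definition unmatched_count (z : T) (R : seq T) : nat :=
  count (fun e => ~~ matched e.1 e.2) (zip (z :: R) R).

Definition admissible_walk (z : T) (R : seq T) : Prop :=
  [/\ path g z R, uniq (z :: R), path admissible z R & 0 < mdeg (last z R)].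

Definition optimal_walk (z : T) (R : seq T) : Prop :=
  admissible_walk z R /\ forall z' R', admissible_walk z' R' ->
    unmatched_count z' R' <= unmatched_count z R.

Lemma matchedC a b : matched a b = matched b a.
Proof. by rewrite /matched setUC. Qed.

Lemma edge_of_mem f x : f \in edges g -> x \in f -> exists2 y, g x y & f = [set x; y].
Proof.
move=> /imset2P[a b _]; rewrite inE => gab -> /set2P[->|->]; first by exists b.
by exists a; rewrite 1?g_sym // setUC.
Qed.

Lemma matched_edge : subrel matched g.
Proof.
move=> a b mab; have [y gay eab] := edge_of_mem (subsetP M_max.1.1 _ mab) (set21 a b).
have /set2P[eba|-> //] : b \in [set a; y] by rewrite -eab set22.
have : y \in [set a; b] by rewrite eab set22.
by rewrite -eba setUid => /set1P eya; rewrite eya eba g_irr in gay.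
Qed.

Lemma matched_neq a b : matched a b -> b != a.
Proof. by move/matched_edge; apply: contraTneq => ->; rewrite g_irr. Qed.

Lemma mdeg_le2 v : mdeg v <= 2.
Proof. exact: M_max.1.2. Qed.

Lemma matched_mdeg_gt0 a b : matched a b -> 0 < mdeg a.
Proof.
by move=> mab; rewrite card_gt0; apply/set0Pn; exists [set a; b]; rewrite inE set21 andbT.
Qed.

Lemma card_incident_setU1 (e : {set T}) v :
  #|[set f in e |: M | v \in f]| <= (v \in e) + mdeg v.
Proof.
have [ve|ve] := boolP (v \in e).
  apply: leq_trans (subset_leq_card (_ : _ \subset e |: [set f in M | v \in f])) _.
    by apply/subsetP => f; rewrite !inE => /andP[/orP[->|->] ->]; rewrite ?orbT.
  by rewrite cardsU1 leq_add2r leq_b1.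
rewrite add0n; apply/subset_leq_card/subsetP => f; rewrite !inE.
by case/andP => /orP[/eqP->|->]; rewrite ?(negbTE ve).
Qed.

Lemma mdeg2_of_unmatched a b : g a b -> ~~ matched a b -> mdeg a < 2 -> mdeg b = 2.
Proof.
move=> gab nmab a_lt2; apply/eqP; rewrite eqn_leq mdeg_le2 leqNgt; apply/negP => b_lt2.
case: M_max => [[sub deg2] maxM]; apply: (maxM ([set a; b] |: M)).
  split=> [|v].
    apply/subsetP => f; rewrite in_setU1 => /predU1P[->|/(subsetP sub)//].
    by apply/imset2P; exists a b; rewrite ?inE.
  apply: leq_trans (card_incident_setU1 _ _) _.
  have [/set2P[]->|vab] := boolP (v \in [set a; b]); rewrite ?add1n ?add0n //.
  exact: deg2.
by apply: properUr; rewrite sub1set.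
Qed.

Lemma exists_matched_vertex : connected g -> 1 < #|T| -> exists v, 0 < mdeg v.
Proof.
move=> conn /card_gt1P[x [y [_ _ xy]]].
have [[|x1 p] /= pxy lxy] := connectP (conn x y); first by rewrite lxy eqxx in xy.
case/andP: pxy => gxx1 _; have [x0|] := posnP (mdeg x); last by exists x.
exists x1; rewrite (mdeg2_of_unmatched gxx1) ?x0 //.
by apply/negP => /matched_mdeg_gt0; rewrite x0.
Qed.

Lemma matched_neighbor x : 0 < mdeg x -> exists y, matched x y.
Proof.
rewrite card_gt0 => /set0Pn[f]; rewrite inE => /andP[fM xf].
have [y _ ef] := edge_of_mem (subsetP M_max.1.1 _ fM) xf.
by exists y; rewrite /matched -ef.
Qed.

Lemma other_matched_neighbor x y0 : mdeg x = 2 -> exists2 y, matched x y & y != y0.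
Proof.
move=> /eqP/cards2P[f1 [f2 [f12 Ex]]].
have [f f12f nf] : exists2 f, f \in [set f1; f2] & f != [set x; y0].
  have [e1|] := eqVneq f1 [set x; y0]; last by exists f1; rewrite ?set21.
  by exists f2; rewrite ?set22 // -e1 eq_sym.
move: f12f; rewrite -Ex inE => /andP[fM xf].
have [y _ ef] := edge_of_mem (subsetP M_max.1.1 _ fM) xf.
by exists y; [rewrite /matched -ef | apply: contraNneq nf => <-; rewrite ef].
Qed.

Lemma leaf_of_matched_neighbors x :
  mdeg x = 1 -> (forall w, g x w -> matched x w) -> leaf g x.
Proof.
move=> x1 all_m; have [y0 mxy0] := matched_neighbor (ltac:(by rewrite x1) : 0 < mdeg x).
rewrite /leaf /deg (_ : [set y | g x y] = [set y0]) ?cards1 //.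
apply/setP => w; rewrite !inE; apply/idP/eqP => [gxw|->]; last exact: matched_edge.
have /card_le1_eqP le1 : #|[set f in M | x \in f]| <= 1 by rewrite -/(mdeg x) x1.
have exw : [set x; w] = [set x; y0].
  by apply: le1; rewrite inE set21 andbT //; apply: all_m.
have : w \in [set x; y0] by rewrite -exw set22.
by case/set2P => // ewx; rewrite ewx g_irr in gxw.
Qed.

Lemma acyclic_uniq_cons z p y :
  path g z p -> uniq (z :: p) -> g y z -> y != head z p -> uniq [:: y, z & p].
Proof.
move=> pp up gyz yh; rewrite cons_uniq up andbT in_cons negb_or.
have -> /= : y != z by apply: contraTneq gyz => ->; rewrite g_irr.
apply/negP => yp; case: p pp up yh yp => [//|a q] pp up yh yp.
set s := a :: q in pp up yp; set i := index y s.
have i_lt : i < size s by rewrite index_mem.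
have i_gt0 : 0 < i by rewrite /i /s /= eq_sym (negbTE yh).
apply: (negP (g_acyclic (take_uniq i.+2 up) _)).
  by rewrite /= size_take; move: i_lt i_gt0; rewrite /s /=; case: ifP => _; lia.
rewrite [take _ _]/= /cycle rcons_path; apply/andP; split.
  by move: pp; rewrite -{1}(cat_take_drop i.+1 s) cat_path => /andP[].
by rewrite -[a :: take i q]/(take i.+1 s) (take_nth z i_lt) last_rcons nth_index.
Qed.

Lemma unmatched_count_cons y z R :
  unmatched_count y (z :: R) = ~~ matched y z + unmatched_count z R.
Proof. by []. Qed.

Lemma admissible_walk_size z R : admissible_walk z R -> size R < #|T|.
Proof. by case=> _ /card_uniqP /= <- _ _; apply: max_card. Qed.

Lemma unmatched_count_lt z R : admissible_walk z R -> unmatched_count z R < #|T|.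
Proof.
move=> /admissible_walk_size; apply: leq_ltn_trans.
by apply: leq_trans (count_size _ _) _; rewrite size_zip /=; lia.
Qed.

Lemma optimal_walk_exists z R : admissible_walk z R -> exists z' R', optimal_walk z' R'.
Proof.
move=> adm; have [k] : exists k, #|T| - unmatched_count z R <= k by exists #|T|; apply: leq_subr.
elim: k z R adm => [|k IHk] z R adm le_k.
  by have := unmatched_count_lt adm; rewrite ltnNge -subn_eq0 -leqn0 le_k.
have [opt|not_opt] := classic (forall z' R', admissible_walk z' R' ->
  unmatched_count z' R' <= unmatched_count z R); first by exists z, R.
have [z' [R' [adm' lt]]] : exists z' R',
    admissible_walk z' R' /\ unmatched_count z R < unmatched_count z' R'.
  apply: NNPP => none; apply: not_opt => z' R' adm'; rewrite leqNgt.
  by apply/negP => lt; apply: none; exists z', R'.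
have lt' := unmatched_count_lt adm'; apply: (IHk _ _ adm'); lia.
Qed.

Lemma optimal_walk_unmatched_start z R : optimal_walk z R ->
  exists z' R', optimal_walk z' R' /\ (R' = [::] \/ ~~ matched z' (head z' R')).
Proof.
elim: R z => [|b R IHR] z opt; first by exists z, [::]; split; [|left].
have [mzb|nmzb] := boolP (matched z b); last by exists z, (b :: R); split; [|right].
apply: (IHR b); case: opt => -[/= /andP[_ pR] /andP[_ uR] /andP[_ aR] lR] opt.
by split=> // z' R' /opt; rewrite unmatched_count_cons mzb.
Qed.

Lemma optimal_cons_matched z R y :
  optimal_walk z R -> matched z y -> y != head z R -> optimal_walk y (z :: R).
Proof.
move=> [[pR uR aR lR] opt] mzy yR; rewrite matchedC in mzy.
have gyz := matched_edge mzy.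
split=> [|z' R' /opt]; last by rewrite unmatched_count_cons mzy.
by split; [rewrite /= gyz | apply: acyclic_uniq_cons | rewrite /= /admissible mzy | ].
Qed.

Lemma optimal_endpoint_leaf x R : optimal_walk x R -> mdeg x = 1 ->
  R = [::] \/ matched x (head x R) -> leaf g x.
Proof.
move=> [[pR uR aR lR] opt] x1 start; apply: (leaf_of_matched_neighbors x1) => w gxw.
apply: contraT => nmxw.
have w2 : mdeg w = 2 by apply: mdeg2_of_unmatched gxw nmxw _; rewrite x1.
have wR : w != head x R.
  case: start => [->|mxh] /=; first by apply: contraTneq gxw => ->; rewrite g_irr.
  by apply: contraNneq nmxw => ->.
have gwx : g w x by rewrite g_sym.
have adm : admissible_walk w (x :: R).
  by split; [rewrite /= gwx | apply: acyclic_uniq_cons | rewrite /= /admissible w2 orbT | ].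
have := opt _ _ adm; rewrite unmatched_count_cons matchedC (negbTE nmxw).
by rewrite add1n ltnn.
Qed.

Lemma matched_descent z R A y :
  optimal_walk z R -> path matched z A -> uniq (z :: A) ->
  matched z y -> y != head z R -> y != head z A ->
  exists u Q, [/\ leaf g u, path matched u Q, uniq (u :: Q) &
                  exists P, u :: Q = P ++ [:: y, z & A]].
Proof.
have [n] : exists n, #|T| <= size R + n by exists #|T|; apply: leq_addl.
elim: n z R A y => [|n IHn] z R A y le_n opt mA uA mzy yR yA.
  by have := admissible_walk_size opt.1; rewrite ltnNge -[size R]addn0 le_n.
have opt' := optimal_cons_matched opt mzy yR.
have myz : matched y z by rewrite matchedC.
have uA' : uniq [:: y, z & A].
  by apply: acyclic_uniq_cons yA; rewrite ?(sub_path matched_edge mA) ?matched_edge.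
have mA' : path matched y (z :: A) by rewrite /= myz.
have [y2|y_ne2] := eqVneq (mdeg y) 2.
  have [y' myy' y'z] := other_matched_neighbor z y2.
  have [|u [Q [lu mQ uQ [P eP]]]] := IHn y (z :: R) (z :: A) y' _ opt' mA' uA' myy' y'z y'z.
    by rewrite /= addSnnS.
  by exists u, Q; split=> //; exists (rcons P y'); rewrite cat_rcons.
exists y, (z :: A); split=> //; last by exists [::].
apply: optimal_endpoint_leaf opt' _ (or_intror myz).
by move: (mdeg_le2 y) (matched_mdeg_gt0 myz) y_ne2; lia.
Qed.

Lemma leaves_joined_by_matched_path : (exists v, 0 < mdeg v) ->
  exists u v, [/\ leaf g u, leaf g v, u != v &
    exists p, [/\ path matched u p, last u p = v & uniq (u :: p)]].
Proof.
move=> [a a_gt0].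
have [z0 [R0 opt0]] : exists z R, optimal_walk z R.
  by apply: (@optimal_walk_exists a [::]); split.
have [z [R [opt start]]] := optimal_walk_unmatched_start opt0.
have off_head y : matched z y -> y != head z R.
  move=> mzy; case: start => [->|nmzh]; first exact: matched_neq.
  by apply: contraNneq nmzh => <-.
have [z2|z_ne2] := eqVneq (mdeg z) 2.
  have [y1 mzy1 _] := other_matched_neighbor z z2.
  have [y2 mzy2 y21] := other_matched_neighbor y1 z2.
  have [|u1 [Q1 [l1 mQ1 uQ1 [P1 eP1]]]] :=
    matched_descent (A := [::]) opt isT isT mzy1 (off_head _ mzy1).
    exact: matched_neq mzy1.
  have eA : rev (u1 :: Q1) = [:: z, y1 & rev P1] by rewrite eP1 rev_cat.
  have mA : path matched z (y1 :: rev P1).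
    rewrite -[path _ _ _]/(sorted matched [:: z, y1 & rev P1]) -eA.
    by rewrite sorted_rev_sym //; apply: matchedC.
  have uA : uniq [:: z, y1 & rev P1] by rewrite -eA rev_uniq.
  have [u2 [Q2 [l2 mQ2 uQ2 [P2 eP2]]]] := matched_descent opt mA uA mzy2 (off_head _ mzy2) y21.
  have lA : last z (y1 :: rev P1) = u1 by rewrite -(last_cons z z) -eA rev_cons last_rcons.
  have [lQ2 u2_ne] := last_cons_eq_cat uQ2 eP2; rewrite lA in lQ2 u2_ne.
  by exists u2, u1; split=> //; exists Q2.
have R_nil : R = [::].
  case: R {off_head} opt start => [//|b R] [[_ _ /andP[azb _] _] _] [//|/negP[]].
  by move: azb; rewrite /admissible (negbTE z_ne2) orbF.
subst R; have z1 : mdeg z = 1.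
  by case: opt => -[_ _ _ /= z_gt0] _; move: (mdeg_le2 z) z_ne2; lia.
have [y1 mzy1] := matched_neighbor (ltac:(by rewrite z1) : 0 < mdeg z).
have [u1 [Q1 [l1 mQ1 uQ1 [P1 eP1]]]] :=
  matched_descent (A := [::]) opt isT isT mzy1 (off_head _ mzy1) (off_head _ mzy1).
have [lQ1 u1_ne] := last_cons_eq_cat uQ1 eP1.
exists u1, z; split=> //; last by exists Q1.
exact: optimal_endpoint_leaf opt z1 (or_introl erefl).
Qed.

End TwoMatchingsInForests.

Theorem proposition2p3 (T : finType) (g : rel T) (M : {set {set T}}) :
  is_tree g -> 1 < #|T| -> maximal_two_matching g M ->
  exists u v : T, [/\ leaf g u, leaf g v, u != v &
    exists p : seq T, [/\ path g u p, last u p = v, uniq (u :: p) &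
                          walk_edges u p \subset M]].
Proof.
move=> [[g_sym g_irr] [g_conn g_acyclic]] T_gt1 M_max.
have [u [v [lu lv uv [p [mp lp up]]]]] := leaves_joined_by_matched_path
  g_sym g_irr g_acyclic M_max (exists_matched_vertex M_max g_conn T_gt1).
exists u, v; split=> //; exists p; split=> //; last exact: walk_edges_sub.
exact: (sub_path (matched_edge g_sym g_irr M_max) mp).
Qed.
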